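(* An automaton $\mathcal{A}=\langle Q,A,\cdot,q_0,F\rangle$ is quasi-zero if and only if its quotient automaton $\mathcal{A}/\!\sim$ (which is the minimal automaton of $L(\mathcal{A})$) is a zero automaton.
   Context: Automata are complete, deterministic, finite, accessible. For a state $q$, $\mathrm{Fut}(q)=\{w: q\cdot w\in F\}$. The Nerode equivalence is $p\sim q$ iff $\mathrm{Fut}(p)=\mathrm{Fut}(q)$; the quotient automaton $\mathcal{A}/\!\sim$ has states the classes $[q]$, initial state $[q_0]$, final states $\{[q]:q\in F\}$ and transitions $[p]\cdot a=[p\cdot a]$. A strongly connected sink component is a nonempty $P\subseteq Q$ such that every state of $P$ is reachable from every other state of $P$ and no state outside $P$ is reachable from $P$; $\mathrm{Sink}(\mathcal{A})$ is the family of these. $\mathcal{A}$ is quasi-zero if either $\bigcup\mathrm{Sink}(\mathcal{A})\subseteq F$ or $\bigcup\mathrm{Sink}(\mathcal{A})\cap F=\emptyset$. A zero automaton is an automaton with a sink state ($q\cdot a=q$ for all $a$) and a synchronising word (a word $w$ with $p\cdot w$ the same for all $p$). *)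

From Stdlib Require Import ClassicalDescription.
From HB Require Import structures.
From mathcomp Require Import all_boot.
Set Implicit Arguments. Unset Strict Implicit. Unset Printing Implicit Defensive.

Record dfa (A : finType) := DFA {
  st : finType;
  tr : st -> A -> st;
  init : st;
  fin : {set st}
}.

Section Automata.
Variable A : finType.
Variable d : dfa A.

Definition act (q : st d) (w : seq A) : st d := foldl (@tr A d) q w.

Definition accessible : Prop := forall q : st d, exists w, act (init d) w = q.

Definition Fut (q : st d) : seq A -> Prop := fun w => act q w \in fin d.

Definition nerode (p q : st d) : Prop := forall w, Fut p w <-> Fut q w.

Definition is_sink_comp (P : {set st d}) : Prop :=
  P != set0 /\
  (forall p q, p \in P -> q \in P -> exists w, act p w = q) /\
  (forall p w, p \in P -> act p w \in P).

Definition in_union_sinks (x : st d) : Prop :=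
  exists P, is_sink_comp P /\ x \in P.

Definition quasi_zero : Prop :=
  (forall x, in_union_sinks x -> x \in fin d) \/
  (forall x, in_union_sinks x -> x \notin fin d).

Definition nerodeb (p q : st d) : bool :=
  if excluded_middle_informative (nerode p q) then true else false.

Definition cls (q : st d) : {set st d} := [set p | nerodeb p q].

Definition is_class (C : {set st d}) : bool := [exists q, C == cls q].

Definition qst : finType := {C : {set st d} | is_class C}.

Lemma cls_is_class (q : st d) : is_class (cls q).
Proof. by apply/existsP; exists q. Qed.

Definition class_of (q : st d) : qst := exist _ (cls q) (cls_is_class q).

Definition rep (C : qst) : st d := odflt (init d) [pick x in sval C].

Definition qtr (C : qst) (a : A) : qst := class_of (tr (rep C) a).

Definition qfin : {set qst} := [set C | [exists q in fin d, C == class_of q]].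

Definition quotient : dfa A := @DFA A qst qtr (class_of (init d)) qfin.

End Automata.

Definition zero_automaton (A : finType) (d : dfa A) : Prop :=
  (exists z : st d, forall a, tr z a = z) /\
  (exists w : seq A, forall p q : st d, act p w = act q w).

From mathcomp Require Import all_boot.
From Stdlib Require Import ClassicalDescription.
Set Implicit Arguments. Unset Strict Implicit. Unset Printing Implicit Defensive.

(* From any state q, a state p reachable from q with the fewest reachable
   states generates a sink component. If d is quasi-zero, the states of the
   sink components all have a constant future (every word, or none), so they
   form a single Nerode class, which is a sink of the quotient; steering each
   state in turn into a sink component yields a synchronising word. Conversely,
   a synchronising word of the quotient leads every class to its sink, so all
   sink components of d collapse onto that class, whose finality decides on
   which side of F they lie. *)

Section Automaton.
Variables (A : finType) (d : dfa A).

Lemma act_cat (p : st d) u v : act p (u ++ v) = act (act p u) v.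
Proof. exact: foldl_cat. Qed.

Definition step : rel (st d) := fun p q => [exists a, tr p a == q].

Lemma connect_stepP (p q : st d) :
  reflect (exists w, act p w = q) (connect step p q).
Proof.
apply: (iffP connectP) => [[s]|[w <-]].
- elim: s p => [|y s IH] p /=; first by move=> _ ->; exists [::].
  case/andP=> /existsP[a /eqP <-] /IH hs /hs[w hw].
  by exists (a :: w).
- elim: w p => [|a w IH] p; first by exists [::].
  have [s hs e] := IH (tr p a).
  by exists (tr p a :: s); rewrite //= hs andbT; apply/existsP; exists a.
Qed.

Definition reach (p : st d) : {set st d} := [set q | connect step p q].

Lemma reach_act (p : st d) w : act p w \in reach p.
Proof. by rewrite inE; apply/connect_stepP; exists w. Qed.

Lemma reach_sub (p q : st d) : connect step p q -> reach q \subset reach p.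
Proof. by move=> pq; apply/subsetP => r; rewrite !inE; apply: connect_trans. Qed.

Lemma sink_comp_reachable (q : st d) :
  exists2 P, is_sink_comp P & exists u, act q u \in P.
Proof.
have [p qp minp] := @arg_minnP _ q (connect step q) (fun p => #|reach p|) (connect0 _ _).
have back r : r \in reach p -> p \in reach r.
  rewrite inE => pr; have /eqP -> : reach r == reach p.
    by rewrite eqEcard reach_sub //= minp // (connect_trans qp pr).
  by rewrite inE connect0.
exists (reach p); last by move/connect_stepP: qp => [u <-]; exists u; rewrite inE connect0.
split; first by apply/set0Pn; exists p; rewrite inE connect0.
split=> [p1 p2 /back|r w rP].
  by rewrite [p \in _]inE => /reach_sub/subsetP sub /sub; rewrite inE => /connect_stepP.
by move: rP; rewrite [r \in _]inE => /reach_sub/subsetP; apply; apply: reach_act.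
Qed.

Lemma sync_into_closed (P : st d -> Prop) :
  (forall q w, P q -> P (act q w)) -> (forall q, exists u, P (act q u)) ->
  exists w, forall q, P (act q w).
Proof.
move=> closedP reach_all.
suff [w hw] : exists w, forall q, q \in enum (st d) -> P (act q w).
  by exists w => q; apply: hw; rewrite mem_enum.
elim: (enum (st d)) => [|p s [w hw]]; first by exists [::].
have [u hu] := reach_all (act p w).
exists (w ++ u) => q; rewrite inE act_cat => /predU1P[-> //|/hw].
exact: closedP.
Qed.

Definition const_fut (b : bool) (q : st d) := forall u, (act q u \in fin d) = b.

Lemma const_fut_act b q w : const_fut b q -> const_fut b (act q w).
Proof. by move=> h u; rewrite -act_cat. Qed.

Lemma quasi_zero_const_fut :
  quasi_zero d -> exists b, forall x, in_union_sinks x -> const_fut b x.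
Proof.
move=> qz; have [b sinkF] : exists b, forall x, in_union_sinks x -> (x \in fin d) = b.
  by case: qz => h; [exists true | exists false] => x /h // /negbTE.
exists b => x [P [sinkP xP]] u; apply: sinkF; exists P; split=> //.
by case: sinkP => _ [_ closedP]; apply: closedP.
Qed.

Lemma nerodebP (p q : st d) : reflect (nerode p q) (nerodeb p q).
Proof. by rewrite /nerodeb; case: excluded_middle_informative; constructor. Qed.

Lemma nerode_refl (p : st d) : nerode p p.
Proof. by []. Qed.

Lemma nerode_sym (p q : st d) : nerode p q -> nerode q p.
Proof. by move=> h w; split=> /h. Qed.

Lemma nerode_trans (p q r : st d) : nerode p q -> nerode q r -> nerode p r.
Proof. by move=> h1 h2 w; split=> [/h1/h2|/h2/h1]. Qed.

Lemma class_of_eq (p q : st d) : class_of p = class_of q <-> nerode p q.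
Proof.
split=> [/(congr1 val)/setP/(_ p)|pq].
  by rewrite !inE => e; apply/nerodebP; rewrite -e; apply/nerodebP.
apply: val_inj; apply/setP => x; rewrite !inE.
by apply/nerodebP/nerodebP => h; [apply: nerode_trans pq | apply: nerode_trans (nerode_sym pq)].
Qed.

Lemma nerode_rep (p : st d) : nerode (rep (class_of p)) p.
Proof.
rewrite /rep; case: pickP => [x|/(_ p)] /=; rewrite inE; first by move/nerodebP.
by have /nerodebP -> := nerode_refl p.
Qed.

Lemma class_of_rep (C : qst d) : class_of (rep C) = C.
Proof.
case: C => C classC; have [q /eqP eC] := existsP classC; subst C.
have -> : exist _ (cls q) classC = class_of q by apply: val_inj.
exact/class_of_eq/nerode_rep.
Qed.

Lemma qtr_class (p : st d) a : qtr (class_of p) a = class_of (tr p a).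
Proof. by apply/class_of_eq => w; apply: (nerode_rep p (a :: w)). Qed.

Lemma qact_class (p : st d) w :
  @act A (quotient d) (class_of p) w = class_of (act p w).
Proof. by elim: w p => [|a w IH] p //=; rewrite qtr_class IH. Qed.

Lemma qfin_class (p : st d) : (class_of p \in qfin d) = (p \in fin d).
Proof.
rewrite inE; apply/existsP/idP => [[q /andP[qF /eqP/class_of_eq pq]]|pF].
  by move: (pq [::]); rewrite /Fut /= => ->.
by exists p; rewrite pF eqxx.
Qed.

Lemma const_fut_class b (p q : st d) :
  const_fut b p -> const_fut b q -> class_of p = class_of q.
Proof. by move=> hp hq; apply/class_of_eq => w; rewrite /Fut hp hq. Qed.

Lemma quotient_zero_of_reach_const_fut b :
  (forall q, exists u, const_fut b (act q u)) -> zero_automaton (quotient d).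
Proof.
move=> reach_b; have [g hg] := reach_b (init d).
split.
  exists (class_of (act (init d) g)) => a /=.
  by rewrite qtr_class; apply: const_fut_class (const_fut_act [:: a] hg) hg.
have [w hw] := sync_into_closed (@const_fut_act b) reach_b.
by exists w => C D; rewrite -(class_of_rep C) -(class_of_rep D) !qact_class;
  apply: const_fut_class.
Qed.

Lemma zero_quotient_sink_class :
  zero_automaton (quotient d) ->
  exists z : qst d, forall x, in_union_sinks x -> class_of x = z.
Proof.
case=> [[z sink_z] [w sync_w]]; exists z.
have z_fixed u : @act A (quotient d) z u = z.
  by elim: u => [|a u IH] //=; have /= -> := sink_z a.
move=> x [P [[_ [connP closedP]] xP]].
have [v xwv] := connP _ _ (closedP x w xP) xP.
have xw_z : class_of (act x w) = z by rewrite -qact_class (sync_w _ z) z_fixed.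
by rewrite -xwv -qact_class xw_z z_fixed.
Qed.

End Automaton.

Theorem proposition7 (A : finType) (d : dfa A) :
  accessible d -> (quasi_zero d <-> zero_automaton (quotient d)).
Proof.
(* The quotient is built on all states of d. *)
move=> _; split=> [qz|zero].
- have [b sink_b] := quasi_zero_const_fut qz.
  apply: (quotient_zero_of_reach_const_fut (b := b)) => q.
  have [P sinkP [u quP]] := sink_comp_reachable q.
  by exists u; apply: sink_b; exists P.
- have [z sink_z] := zero_quotient_sink_class zero.
  by case: (boolP (z \in qfin d)) => zF; [left|right] => x /sink_z xz;
    rewrite -qfin_class xz.
Qed.
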